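(* Let $w/u$ be a skew partition of length $r$, $v$ a partition, and $c=(c_1,c_2'):\mathcal D(w/u)\to Y(v)$ a bijection such that (Y) for every $x\in\mathcal D(w/u)$ the set $C(x)=\{c(y): y\le_{LR}x\}$ is a Young diagram, and $c_1$ satisfies (L1) $c_1(i,j)<c_1(i',j)$ whenever $(i,j),(i',j)\in\mathcal D(w/u)$, $i<i'$, and (L2) $c_1(i,j)\le c_1(i,j')$ whenever $(i,j),(i,j')\in\mathcal D(w/u)$, $j<j'$. Then $c_1$ also satisfies (L3): for all $x\in\mathcal D(w/u)$ and $k\in\mathbb N^*$, $\sigma_k(x)\ge\sigma_{k+1}(x)$ where $\sigma_k(x)=\operatorname{card}\{y\le_{LR}x: c_1(y)=k\}$; and moreover $c_2'=c_2$, where $c_2(x)=\operatorname{card}\{y\le_{LR}x: c_1(y)=c_1(x)\}$.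
   Context: A generalized partition of length $r$ is a weakly decreasing integer sequence $u=(u_1,\dots,u_r)$, with $\mathcal D(u)=\{(i,j)\in\{1,\dots,r\}\times\mathbb Z: j\le u_i\}$; a skew partition $w/u$ means $\mathcal D(u)\subset\mathcal D(w)$, $\mathcal D(w/u)=\mathcal D(w)\setminus\mathcal D(u)$. For a partition $v$, $Y(v)=\{(i,j): i\ge1,\ 1\le j\le v_i\}$; a Young diagram is a set of the form $Y(\mu)$ for a partition $\mu$. The LR order on $\mathcal D(w/u)$ is the total order with $(i,j)<_{LR}(i',j')$ if $i<i'$, and $(i,j)<_{LR}(i,j')$ if $j>j'$. *)

From mathcomp Require Import all_boot all_order all_algebra.
Set Implicit Arguments. Unset Strict Implicit. Unset Printing Implicit Defensive.
Import Order.TTheory GRing.Theory Num.Theory.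

(* Cells of generalized diagrams: (row, column) with row : nat (1-based), column : int. *)
Definition gcell := (nat * int)%type.
(* Cells of Young diagrams: (row, column), both 1-based naturals. *)
Definition ycell := (nat * nat)%type.

Definition gpart_at (u : seq int) (i : nat) : int := nth 0%R u i.-1.
Definition part_at (v : seq nat) (i : nat) : nat := nth 0%N v i.-1.

Definition gen_partition (u : seq int) : bool := sorted (fun a b : int => (b <= a)%R) u.
(* partition: weakly decreasing sequence of naturals (trailing zeros allowed) *)
Definition is_partition (v : seq nat) : bool := sorted geq v.

Definition skew_partition (r : nat) (w u : seq int) : Prop :=
  [/\ gen_partition w, gen_partition u, size w = r, size u = r &
      forall i, (1 <= i <= r)%N -> (gpart_at u i <= gpart_at w i)%R].

Definition inD (w u : seq int) (x : gcell) : bool :=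
  (1 <= x.1 <= size u)%N && ((gpart_at u x.1 < x.2)%R && (x.2 <= gpart_at w x.1)%R).

Definition cellsD (w u : seq int) : seq gcell :=
  flatten [seq [seq (i, gpart_at u i + (k.+1)%:Z)%R
               | k <- iota 0 `|gpart_at w i - gpart_at u i|%N]
          | i <- iota 1 (size u)].

Definition inY (v : seq nat) (p : ycell) : bool :=
  (1 <= p.1)%N && (1 <= p.2 <= part_at v p.1)%N.

Definition leLR (y x : gcell) : bool :=
  (y.1 < x.1)%N || ((y.1 == x.1) && (x.2 <= y.2)%R).

Definition young_diagram (S : ycell -> Prop) : Prop :=
  exists mu : seq nat, is_partition mu /\ forall p, S p <-> inY mu p.

Definition Cset (w u : seq int) (c : gcell -> ycell) (x : gcell) : ycell -> Prop :=
  fun p => exists y, [/\ inD w u y, leLR y x & c y = p].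

Definition sigma (w u : seq int) (c1 : gcell -> nat) (k : nat) (x : gcell) : nat :=
  count (fun y => leLR y x && (c1 y == k)) (cellsD w u).

Definition c2 (w u : seq int) (c1 : gcell -> nat) (x : gcell) : nat :=
  sigma w u c1 (c1 x) x.

From mathcomp Require Import all_boot all_order all_algebra zify.
Import Order.TTheory GRing.Theory Num.Theory.

Set Implicit Arguments.
Unset Strict Implicit.
Unset Printing Implicit Defensive.

(* By (Y), C(x) = Y(mu) for a partition mu, and since c is injective,
   sigma_k(x) counts the cells of row k of C(x): sigma_k(x) = mu_k.  (L3) is
   then the monotonicity of mu.  If c(x) = (a, b), then c_2(x) = mu_a >= b;
   were b < mu_a, the cell (a, mu_a) would be c(y) for some y <=_LR x, the
   Young diagram C(y) would contain (a, b) = c(x), and injectivity would give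
   x <=_LR y, hence y = x. *)

Lemma cellsD_uniq (w u : seq int) : uniq (cellsD w u).
Proof.
apply: allpairs_uniq_dep => [|i _|]; rewrite ?iota_uniq //.
by case=> [i k] [i' k'] _ _ /= [<-] /addrI [->].
Qed.

Lemma mem_cellsD {r : nat} {w u : seq int} (y : gcell) :
  skew_partition r w u -> (y \in cellsD w u) = inD w u y.
Proof.
case=> _ _ _ size_u le_uw; case: y => i j; rewrite /inD /=.
apply/allpairsPdep/idP => [[i' [k [i'_in k_in [-> ->]]]] |].
  move: i'_in k_in; rewrite !mem_iota => i'_bd k_bd.
  have := le_uw i'; rewrite size_u in i'_bd; lia.
move=> /and3P [i_bd lt_ui le_jw].
exists i, `|(j - gpart_at u i - 1)%R|%N; rewrite !mem_iota.
by split; [lia | lia | congr pair; lia].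
Qed.

Lemma leLR_refl : reflexive leLR.
Proof. by move=> x; rewrite /leLR ltnn eqxx lexx. Qed.

Lemma leLR_anti (x y : gcell) : leLR x y -> leLR y x -> x = y.
Proof.
case: x y => [i j] [i' j']; rewrite /leLR /= => le_xy le_yx.
by congr pair; lia.
Qed.

Lemma part_at_succ_le (mu : seq nat) (k : nat) :
  is_partition mu -> (0 < k)%N -> (part_at mu k.+1 <= part_at mu k)%N.
Proof.
case: k => [|k] // sorted_mu _; rewrite /part_at /=.
have [lt_k_mu | le_mu_k] := ltnP k.+1 (size mu); last by rewrite nth_default.
apply: (sorted_leq_nth (leT := geq) _ leqnn) => //; last by rewrite inE ltnW.
by move=> a b c ba cb; apply: leq_trans cb ba.
Qed.

Section YoungFilling.

Variables (r : nat) (w u : seq int) (c : gcell -> ycell).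
Hypothesis skew_wu : skew_partition r w u.
Hypothesis c_inj : forall x y, inD w u x -> inD w u y -> c x = c y -> x = y.

Local Notation c1 := (fun y => (c y).1).

Lemma sigma_eq_part_at (x : gcell) (mu : seq nat) (k : nat) :
  (forall p, Cset w u c x p <-> inY mu p) -> (0 < k)%N ->
  sigma w u c1 k x = part_at mu k.
Proof.
move=> C_mu k_gt0; rewrite /sigma -size_filter -(size_map c).
set s := filter _ _.
have mem_s y : (y \in s) = [&& inD w u y, leLR y x & (c y).1 == k].
  by rewrite mem_filter (mem_cellsD y skew_wu) andbC.
set row := [seq (k, j) | j <- iota 1 (part_at mu k)].
have mem_row p : (p \in row) = (p.1 == k) && inY mu p.
  case: p => a b; apply/mapP/idP => [[j] | /andP [/eqP /= -> Y_kb]].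
    by rewrite mem_iota /inY => j_bd [-> ->] /=; rewrite eqxx; lia.
  by exists b => //; rewrite mem_iota; move: Y_kb; rewrite /inY /=; lia.
have mem_cs p : (p \in map c s) = (p \in row).
  rewrite mem_row; apply/mapP/andP => [[y] | [/eqP p1 /C_mu [y [Dy le_yx cy]]]].
    rewrite mem_s => /and3P [Dy le_yx /eqP cy1] ->.
    by split; [rewrite cy1 | apply/C_mu; exists y].
  by exists y; rewrite // mem_s Dy le_yx cy p1 eqxx.
have uniq_cs : uniq (map c s).
  rewrite map_inj_in_uniq ?filter_uniq ?cellsD_uniq // => y z.
  by rewrite !mem_s => /and3P [Dy _ _] /and3P [Dz _ _]; apply: c_inj.
have uniq_row : uniq row by rewrite map_inj_uniq ?iota_uniq // => j j' [].
by rewrite (perm_size (uniq_perm uniq_cs uniq_row mem_cs)) size_map size_iota.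
Qed.

Lemma mem_Cset_image (x y : gcell) :
  inD w u x -> Cset w u c y (c x) <-> leLR x y.
Proof.
move=> Dx; split=> [[z [Dz le_zy cz]] | le_xy]; last by exists x.
by rewrite -(c_inj Dz Dx cz).
Qed.

Hypothesis Young_C : forall x, inD w u x -> young_diagram (Cset w u c x).

Lemma sigma_succ_le (x : gcell) (k : nat) :
  inD w u x -> (0 < k)%N -> (sigma w u c1 k.+1 x <= sigma w u c1 k x)%N.
Proof.
move=> Dx k_gt0; have [mu [part_mu C_mu]] := Young_C Dx.
by rewrite !(sigma_eq_part_at C_mu) //; apply: part_at_succ_le part_mu k_gt0.
Qed.

Lemma snd_eq_c2 (x : gcell) : inD w u x -> (c x).2 = c2 w u c1 x.
Proof.
move=> Dx; have [mu [_ C_mu]] := Young_C Dx.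
case cx: (c x) => [a b].
have /C_mu : Cset w u c x (a, b) by rewrite -cx; apply/mem_Cset_image/leLR_refl.
rewrite /inY /= => /and3P [a_gt0 b_gt0 le_b_mu].
rewrite /c2 cx /= (sigma_eq_part_at C_mu) //.
apply/eqP; rewrite eqn_leq le_b_mu leqNgt; apply/negP => lt_b_mu.
have [y [Dy le_yx cy]] : Cset w u c x (a, part_at mu a).
  by apply/C_mu; rewrite /inY /=; lia.
have [mu' [_ C_mu']] := Young_C Dy.
have /C_mu' : Cset w u c y (a, part_at mu a).
  by rewrite -cy; apply/mem_Cset_image/leLR_refl.
rewrite /inY /= => /and3P [_ _ le_mu_mu'].
have /(mem_Cset_image _ Dx)/(leLR_anti le_yx) y_eq_x : Cset w u c y (c x).
  by rewrite cx; apply/C_mu'; rewrite /inY /=; lia.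
by move: cy lt_b_mu; rewrite y_eq_x cx => -[->]; rewrite ltnn.
Qed.

End YoungFilling.

Theorem lemma4p8 (r : nat) (w u : seq int) (v : seq nat) (c : gcell -> ycell) :
  skew_partition r w u ->
  is_partition v ->
  (* c is a bijection D(w/u) -> Y(v) *)
  (forall x, inD w u x -> inY v (c x)) ->
  (forall x y, inD w u x -> inD w u y -> c x = c y -> x = y) ->
  (forall p, inY v p -> exists x, inD w u x /\ c x = p) ->
  (* (Y) *)
  (forall x, inD w u x -> young_diagram (Cset w u c x)) ->
  (* (L1) *)
  (forall (i i' : nat) (j : int), inD w u (i, j) -> inD w u (i', j) ->
     (i < i')%N -> ((c (i, j)).1 < (c (i', j)).1)%N) ->
  (* (L2) *)
  (forall (i : nat) (j j' : int), inD w u (i, j) -> inD w u (i, j') ->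
     (j < j')%R -> ((c (i, j)).1 <= (c (i, j')).1)%N) ->
  (* (L3) and c_2' = c_2 *)
  (forall x k, inD w u x -> (1 <= k)%N ->
     (sigma w u (fun y => (c y).1) k.+1 x <= sigma w u (fun y => (c y).1) k x)%N) /\
  (forall x, inD w u x -> (c x).2 = c2 w u (fun y => (c y).1) x).
Proof.
move=> skew_wu _ _ c_inj _ Young_C _ _.
split; [exact: (sigma_succ_le skew_wu c_inj Young_C)
      | exact: (snd_eq_c2 skew_wu c_inj Young_C)].
Qed.
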